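(* Let $n\geqslant 2$ and $\alpha,\beta\in\mathbf{I}\mathbb{N}_{\infty}^n$. Then: (i) $\alpha\mathscr{L}\beta$ iff there exists $\sigma\in H(\mathbb{I})$ with $\alpha=\sigma\beta$; (ii) $\alpha\mathscr{R}\beta$ iff there exists $\sigma\in H(\mathbb{I})$ with $\alpha=\beta\sigma$; (iii) $\alpha\mathscr{H}\beta$ iff there exist $\sigma_1,\sigma_2\in H(\mathbb{I})$ with $\alpha=\sigma_1\beta$ and $\alpha=\beta\sigma_2$; (iv) $\alpha\mathscr{D}\beta$ iff there exist $\sigma_1,\sigma_2\in H(\mathbb{I})$ with $\alpha=\sigma_1\beta\sigma_2$; (v) $\mathscr{D}=\mathscr{J}$ on $\mathbf{I}\mathbb{N}_{\infty}^n$; (vi) every $\mathscr{J}$-class of $\mathbf{I}\mathbb{N}_{\infty}^n$ is finite and consists of pairwise incomparable elements with respect to the natural partial order $\preccurlyeq$.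
   Context: $\mathbb{N}=\{1,2,3,\ldots\}$, $n\geqslant 2$, and $\mathbb{N}^n$ carries the Euclidean metric $d$. A partial isometry of $\mathbb{N}^n$ is an injective partial map $\alpha\colon\mathbb{N}^n\rightharpoonup\mathbb{N}^n$ with $d((\mathbf{x})\alpha,(\mathbf{y})\alpha)=d(\mathbf{x},\mathbf{y})$ for all $\mathbf{x},\mathbf{y}\in\operatorname{dom}\alpha$; it is cofinite if $\mathbb{N}^n\setminus\operatorname{dom}\alpha$ and $\mathbb{N}^n\setminus\operatorname{ran}\alpha$ are finite. $\mathbf{I}\mathbb{N}_{\infty}^n$ is the monoid of all partial cofinite isometries of $\mathbb{N}^n$ under composition of partial maps written on the right. Its identity is the identity map $\mathbb{I}$ of $\mathbb{N}^n$ and $H(\mathbb{I})$ is its group of units. Green's relations on a semigroup $S$: $a\mathscr{R}b$ iff $aS^1=bS^1$; $a\mathscr{L}b$ iff $S^1a=S^1b$; $a\mathscr{J}b$ iff $S^1aS^1=S^1bS^1$; $\mathscr{D}=\mathscr{L}\circ\mathscr{R}$; $\mathscr{H}=\mathscr{L}\cap\mathscr{R}$. The natural partial order on the inverse semigroup $\mathbf{I}\mathbb{N}_{\infty}^n$ is $s\preccurlyeq t$ iff $s=te$ for some idempotent $e$. *)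

From mathcomp Require Import all_boot.
From Stdlib Require List.
Set Implicit Arguments. Unset Strict Implicit. Unset Printing Implicit Defensive.

(* A point is encoded by x : 'I_n -> nat where
   coordinate value k represents the positive integer k+1.  This shift
   is a bijection nat -> N preserving all differences, hence Euclidean
   distances, so it is an isometric identification of the metric spaces. *)
Definition pt (n : nat) := {ffun 'I_n -> nat}.

Definition absdiff (a b : nat) : nat := (a - b) + (b - a).

(* squared Euclidean distance; d(x,y) = sqrt (dist2 x y), and since sqrt is
   injective on nonnegative reals, d is preserved iff dist2 is preserved. *)
Definition dist2 n (x y : pt n) : nat := \sum_(i < n) (absdiff (x i) (y i)) ^ 2.

Definition ppmap n := pt n -> option (pt n).

Definition dom n (a : ppmap n) (x : pt n) : Prop := exists y, a x = Some y.
Definition ran n (a : ppmap n) (y : pt n) : Prop := exists x, a x = Some y.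

Definition pinjective n (a : ppmap n) : Prop :=
  forall x y z, a x = Some z -> a y = Some z -> x = y.

Definition pisometry n (a : ppmap n) : Prop :=
  forall x y x' y', a x = Some x' -> a y = Some y' -> dist2 x' y' = dist2 x y.

Definition finite_pred n (P : pt n -> Prop) : Prop :=
  exists s : seq (pt n), forall x, P x -> x \in s.

Definition cofinite n (a : ppmap n) : Prop :=
  finite_pred (fun x => ~ dom a x) /\ finite_pred (fun y => ~ ran a y).

Definition IN n (a : ppmap n) : Prop :=
  pinjective a /\ pisometry a /\ cofinite a.

(* composition of partial maps written on the right: x (a b) = (x a) b *)
Definition compR n (a b : ppmap n) : ppmap n := fun x => obind b (a x).

Definition idI n : ppmap n := fun x => Some x.

(* S^1 (the monoid with identity adjoined; here S already contains it) *)
Definition IN1 n (u : ppmap n) : Prop := IN u \/ u = @idI n.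

Definition greenR n (a b : ppmap n) : Prop :=
  forall c, (exists u, IN1 u /\ c = compR a u) <-> (exists u, IN1 u /\ c = compR b u).
Definition greenL n (a b : ppmap n) : Prop :=
  forall c, (exists u, IN1 u /\ c = compR u a) <-> (exists u, IN1 u /\ c = compR u b).
Definition greenJ n (a b : ppmap n) : Prop :=
  forall c, (exists u v, IN1 u /\ IN1 v /\ c = compR (compR u a) v) <->
            (exists u v, IN1 u /\ IN1 v /\ c = compR (compR u b) v).
Definition greenH n (a b : ppmap n) : Prop := greenL a b /\ greenR a b.
Definition greenD n (a b : ppmap n) : Prop :=
  exists c, IN c /\ greenL a c /\ greenR c b.

(* group of units H(I): the H-class of the identity *)
Definition HI n (s : ppmap n) : Prop := IN s /\ greenH s (@idI n).

Definition npo n (s t : ppmap n) : Prop :=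
  exists e, IN e /\ compR e e = e /\ s = compR t e.

(* A cofinite partial isometry of N^n is the restriction of a coordinate permutation.
   Far out in its domain lies o = (N,...,N) with its unit neighbours o + e_i, whose
   images are Q and points at distance 1 from Q, i.e. Q +- e_(p i).  Moving a point one
   step along coordinate j changes its squared distance from y by 2 (z_j - y_j) + 1, so
   comparing the distances from any x in the domain to o and o + e_i with those from its
   image y yields y_(p i) - Q_(p i) = +-(x_i - N).  The minus sign fails for large x_i,
   and Q_(p i) = N because, as n >= 2, both the domain and the range contain points with
   a zero coordinate.  Hence the units are the coordinate permutations, and each Green
   relation compares domains or ranges up to a permutation; two sets each contained in
   a permuted copy of the other coincide up to that permutation, since permutations have
   finite order. *)

From mathcomp Require Import all_boot.
From Stdlib Require List.
From mathcomp Require Import fingroup perm zify.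
From Stdlib Require Import Classical FunctionalExtensionality.
Set Implicit Arguments. Unset Strict Implicit. Unset Printing Implicit Defensive.

Lemma In_enum (T : finType) (x : T) : List.In x (enum T).
Proof.
have : x \in enum T by rewrite mem_enum.
elim: (enum T) => [//|y s IHs]; rewrite in_cons => /orP[/eqP ->|/IHs]; by [left | right].
Qed.

Section Points.
Variable n : nat.
Implicit Types (x y z : pt n).

Lemma absdiffS_sq a b : absdiff a b.+1 ^ 2 + 2 * a = absdiff a b ^ 2 + 2 * b + 1.
Proof. rewrite /absdiff; nia. Qed.

Lemma absdiff_eq0 a b : (absdiff a b == 0) = (a == b).
Proof. rewrite /absdiff; apply/eqP/eqP; lia. Qed.

Definition bump x (i : 'I_n) k : pt n := [ffun j => if j == i then x j + k else x j].

Lemma dist2xx x : dist2 x x = 0.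
Proof. by rewrite /dist2 big1 // => i _; rewrite /absdiff subnn. Qed.

Lemma dist2_bump1 y z (j : 'I_n) :
  dist2 y (bump z j 1) + 2 * y j = dist2 y z + 2 * z j + 1.
Proof.
rewrite /dist2 (bigD1 j) // [in RHS](bigD1 j) //= ffunE eqxx addn1.
rewrite (eq_bigr (fun k => absdiff (y k) (z k) ^ 2)) => [|k /negbTE kj]; last first.
  by rewrite ffunE kj.
have := absdiffS_sq (y j) (z j).
move: (absdiff _ _ ^ 2) (absdiff _ _ ^ 2) (\sum_(_ | _) _) => u v w; lia.
Qed.

Lemma dist2_eq1 y z : dist2 y z = 1 -> exists j, z = bump y j 1 \/ y = bump z j 1.
Proof.
rewrite /dist2 => d1.
have [j nz_j] : exists j, absdiff (y j) (z j) != 0.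
  apply/existsP; apply: contraT; rewrite negb_exists => /forallP z0.
  by move: d1; rewrite big1 // => k _; move/negbNE/eqP: (z0 k) => ->.
move: d1; rewrite (bigD1 j) //= => d1.
have /eqP : \sum_(k | k != j) absdiff (y k) (z k) ^ 2 = 0.
  by move: nz_j d1; move: (absdiff _ _) (\sum_(_ | _) _) => u w; nia.
rewrite sum_nat_eq0 => /forallP off_j.
have same k : k != j -> y k = z k.
  by move=> kj; move/implyP/(_ kj): (off_j k); rewrite expn_eq0 andbT absdiff_eq0 => /eqP.
have : absdiff (y j) (z j) = 1.
  by move: nz_j d1; case: (absdiff _ _) => [|[|d]] //; rewrite !expnS; lia.
rewrite /absdiff => dj; exists j.
have [yz|zy] : z j = y j + 1 \/ y j = z j + 1 by lia.
  by left; apply/ffunP => k; rewrite ffunE; case: eqP => [->|/eqP/same].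
by right; apply/ffunP => k; rewrite ffunE; case: eqP => [->|/eqP/same].
Qed.

Lemma finite_pred_bounded (P : pt n -> Prop) :
  finite_pred P -> exists N, forall x k, N <= x k -> ~ P x.
Proof.
move=> [s Ps]; exists (\max_(z <- s) \max_k z k).+1 => x k Nx /Ps xs.
have := leq_bigmax_seq (P := fun _ => true) (F := fun z : pt n => \max_k z k) x xs isT.
by move/(leq_trans (leq_bigmax k)); rewrite leqNgt Nx.
Qed.

Lemma pt_zero_at (i : 'I_n) M : 1 < n -> exists2 x : pt n, x i = 0 & exists k, M <= x k.
Proof.
move=> n_gt1; exists [ffun k => if k == i then 0 else M]; first by rewrite ffunE eqxx.
have [k ki] : exists k : 'I_n, k != i.
  have [-> | ] := eqVneq i (Ordinal (ltnW n_gt1)); first by exists (Ordinal n_gt1).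
  by exists (Ordinal (ltnW n_gt1)); rewrite eq_sym.
by exists k; rewrite ffunE (negbTE ki).
Qed.

Definition permute (q : {perm 'I_n}) x : pt n := [ffun j => x (q j)].

Definition sub_permute (a : ppmap n) (q : {perm 'I_n}) :=
  forall x y, a x = Some y -> y = permute q x.

Section CofiniteIsometry.
Variables (a : ppmap n) (N N' : nat).
Hypothesis n_gt1 : 1 < n.
Hypothesis iso_a : pisometry a.
Hypothesis dom_a : forall x k, N <= x k -> dom a x.
Hypothesis ran_a : forall z k, N' <= z k -> ran a z.

Let img x := odflt x (a x).
Let o : pt n := [ffun=> N].
Let Q := img o.
Let P i := img (bump o i 1).

Lemma img_big x k : N <= x k -> a x = Some (img x).
Proof. by move=> /dom_a [y]; rewrite /img => ->. Qed.

Lemma img_o : a o = Some Q.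
Proof. by apply: (img_big (k := Ordinal (ltnW n_gt1))); rewrite ffunE. Qed.

Lemma img_bump i k : a (bump o i k) = Some (img (bump o i k)).
Proof. by apply: (img_big (k := i)); rewrite !ffunE eqxx leq_addr. Qed.

Lemma dist2_Q_P i : dist2 Q (P i) = 1.
Proof.
rewrite (iso_a img_o (img_bump i 1)).
by have := dist2_bump1 o o i; rewrite dist2xx; lia.
Qed.

Let p i : 'I_n := odflt i [pick j | (P i == bump Q j 1) || (Q == bump (P i) j 1)].

Lemma p_spec i : P i = bump Q (p i) 1 \/ Q = bump (P i) (p i) 1.
Proof.
rewrite /p; case: pickP => [j /orP[]/eqP|none]; [by left|by right|].
have [j [PQ|QP]] := dist2_eq1 (dist2_Q_P i).
  by move: (none j); rewrite PQ eqxx.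
by move: (none j); rewrite QP eqxx orbT.
Qed.

Lemma coord_step i x y : a x = Some y ->
  (P i = bump Q (p i) 1 -> y (p i) + N = x i + Q (p i)) /\
  (Q = bump (P i) (p i) 1 -> x i + y (p i) = N + Q (p i)).
Proof.
move=> axy; have := dist2_bump1 x o i; rewrite !ffunE.
rewrite -(iso_a axy (img_bump i 1)) -(iso_a axy img_o) -/(P i) -/Q.
split=> [PQ | QP].
  by have := dist2_bump1 y Q (p i); rewrite -PQ; lia.
have := dist2_bump1 y (P i) (p i); rewrite -QP.
have -> : Q (p i) = P i (p i) + 1 by rewrite QP ffunE eqxx.
lia.
Qed.

Lemma coord_shift i x y : a x = Some y -> y (p i) + N = x i + Q (p i).
Proof.
move=> axy; case: (p_spec i) => [PQ | QP]; first exact: (coord_step i axy).1 PQ.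
have := (coord_step i (img_bump i (Q (p i)).+1)).2 QP.
by rewrite !ffunE eqxx; lia.
Qed.

Lemma Q_p i : Q (p i) = N.
Proof.
case: (ltngtP (Q (p i)) N) => // [lt_QN|lt_NQ].
  have [x xi0 [k /img_big/(coord_shift i)]] := pt_zero_at i N n_gt1.
  by rewrite xi0; lia.
have [z zp0 [k /ran_a[x /(coord_shift i)]]] := pt_zero_at (p i) N' n_gt1.
by rewrite zp0; lia.
Qed.

Lemma coord_image i x y : a x = Some y -> y (p i) = x i.
Proof. by move/(coord_shift i); rewrite Q_p; lia. Qed.

Lemma p_inj : injective p.
Proof.
move=> i i' pii'; apply/eqP; apply: contraT => ii'.
have := coord_image i' (img_bump i 1); rewrite -pii' (coord_image i (img_bump i 1)).
by rewrite !ffunE eqxx eq_sym (negbTE ii'); lia.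
Qed.

Lemma sub_permute_of_isometry : exists q, sub_permute a q.
Proof.
exists (perm p_inj)^-1%g => x y axy; apply/ffunP => j; rewrite ffunE.
by rewrite -(coord_image _ axy) -(permE p_inj) permKV.
Qed.

End CofiniteIsometry.

Implicit Types (a b c u v : ppmap n) (q r : {perm 'I_n}).

Lemma IN_sub_permute a : 1 < n -> IN a -> exists q, sub_permute a q.
Proof.
move=> n_gt1 [_ [iso_a [dom_fin ran_fin]]].
have [N domN] := finite_pred_bounded dom_fin.
have [N' ranN'] := finite_pred_bounded ran_fin.
apply: (sub_permute_of_isometry (N := N) (N' := N')) => // x k Nx.
  exact: NNPP (domN x k Nx).
exact: NNPP (ranN' x k Nx).
Qed.

Lemma permuteM q r x : permute q (permute r x) = permute (q * r)%g x.
Proof. by apply/ffunP => j; rewrite !ffunE permM. Qed.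

Lemma permute1 x : permute 1%g x = x.
Proof. by apply/ffunP => j; rewrite !ffunE perm1. Qed.

Lemma permuteK q : cancel (permute q) (permute q^-1%g).
Proof. by move=> x; rewrite permuteM mulVg permute1. Qed.

Lemma permuteKV q : cancel (permute q^-1%g) (permute q).
Proof. by move=> x; rewrite permuteM mulgV permute1. Qed.

Lemma permute_inj q : injective (permute q).
Proof. exact: can_inj (permuteK q). Qed.

Lemma dist2_permute q x y : dist2 (permute q x) (permute q y) = dist2 x y.
Proof.
rewrite /dist2 (reindex_inj (@perm_inj _ q^-1%g)) /=.
by apply: eq_bigr => i _; rewrite !ffunE permKV.
Qed.

Lemma permute_closedV (D : pt n -> Prop) q :
  (forall x, D x -> D (permute q x)) -> forall x, D (permute q x) -> D x.
Proof.
move=> Dq; have Dqk k x : D x -> D (permute (q ^+ k)%g x).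
  by elim: k x => [|k IHk] x Dx; rewrite ?expg0 ?permute1 // expgS -permuteM; apply/Dq/IHk.
move=> x /(Dqk #[q]%g.-1); rewrite permuteM -expgSr prednK ?order_gt0 //.
by rewrite expg_order permute1.
Qed.

Lemma permute_incl_eq (A B : pt n -> Prop) q q' :
  (forall x, A x -> B (permute q x)) -> (forall x, B x -> A (permute q' x)) ->
  forall x, B (permute q x) -> A x.
Proof.
move=> AB BA x /BA; rewrite permuteM; apply: permute_closedV => y /AB /BA.
by rewrite permuteM.
Qed.

Definition pperm q : ppmap n := fun x => Some (permute q x).

Lemma compR_assoc a b c : compR (compR a b) c = compR a (compR b c).
Proof. by apply: functional_extensionality => x; rewrite /compR; case: (a x). Qed.

Lemma compR_idr a : compR a (@idI n) = a.
Proof. by apply: functional_extensionality => x; rewrite /compR; case: (a x). Qed.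

Lemma pperm_mul q r : compR (pperm q) (pperm r) = pperm (r * q)%g.
Proof. by apply: functional_extensionality => x; rewrite /compR /pperm /= permuteM. Qed.

Lemma pperm1 : pperm 1%g = @idI n.
Proof. by apply: functional_extensionality => x; rewrite /pperm permute1. Qed.

Lemma ppermVK q a : compR (pperm q^-1%g) (compR (pperm q) a) = a.
Proof. by rewrite -compR_assoc pperm_mul mulgV pperm1. Qed.

Lemma sub_permute_pperm q : sub_permute (pperm q) q.
Proof. by move=> x y [<-]. Qed.

Lemma sub_permute_compR a b qa qb :
  sub_permute a qa -> sub_permute b qb -> sub_permute (compR a b) (qb * qa)%g.
Proof.
move=> Sa Sb x z; rewrite /compR; case ax: (a x) => [y|] //= /Sb ->.
by rewrite (Sa _ _ ax) permuteM.
Qed.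

Lemma IN_pperm q : IN (pperm q).
Proof.
split; [|split; [|split]].
- by move=> x y z [<-] [/permute_inj].
- by move=> x y x' y' [<-] [<-]; rewrite dist2_permute.
- by exists [::] => x []; exists (permute q x).
- by exists [::] => y []; exists (permute q^-1%g y); rewrite /pperm permuteKV.
Qed.

Lemma IN_idI : IN (@idI n).
Proof. by rewrite -pperm1; apply: IN_pperm. Qed.

Lemma IN1_IN u : IN1 u -> IN u.
Proof. by case=> [//|->]; apply: IN_idI. Qed.

Lemma dom_compR a v x : dom (compR a v) x -> dom a x.
Proof. by rewrite /compR /dom; case: (a x) => [y|] //= _; exists y. Qed.

Lemma ran_compR u b y : ran (compR u b) y -> ran b y.
Proof. by move=> [x]; rewrite /compR; case: (u x) => [z|] //= bz; exists z. Qed.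

Lemma dom_compR_sub_permute u b v q x :
  sub_permute u q -> dom (compR (compR u b) v) x -> dom b (permute q x).
Proof.
move=> Su /dom_compR[z]; rewrite /compR; case ux: (u x) => [y|] //= by_.
by exists z; rewrite -(Su _ _ ux).
Qed.

Lemma sub_permute_dom_eq a b qa qb : sub_permute a qa -> sub_permute b qb ->
  (forall x, dom a x <-> dom b x) -> a = compR b (pperm (qa * qb^-1)%g).
Proof.
move=> Sa Sb ab; apply: functional_extensionality => x; rewrite /compR.
case ax: (a x) => [y|]; case bx: (b x) => [z|] //=.
- by rewrite (Sa _ _ ax) (Sb _ _ bx) /pperm permuteM mulgKV.
- by have [z bz] := (ab x).1 (ex_intro _ y ax); rewrite bx in bz.
- by have [y ay] := (ab x).2 (ex_intro _ z bx); rewrite ax in ay.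
Qed.

Lemma sub_permute_ran_eq a b qa qb : sub_permute a qa -> sub_permute b qb ->
  (forall y, ran a y <-> ran b y) -> a = compR (pperm (qb^-1 * qa)%g) b.
Proof.
move=> Sa Sb ab; apply: functional_extensionality => x; rewrite /compR /pperm /=.
case ax: (a x) => [y|].
  have [x' bx'] := (ab y).1 (ex_intro _ x ax).
  suff -> : permute (qb^-1 * qa)%g x = x' by [].
  by rewrite -permuteM -(Sa _ _ ax) (Sb _ _ bx') permuteK.
case bx: (b _) => [z|] //.
have [x' ax'] := (ab z).2 (ex_intro _ _ bx).
suff x'x : x' = x by rewrite x'x ax in ax'.
by apply: (@permute_inj qa); rewrite -(Sa _ _ ax') (Sb _ _ bx) permuteM mulgA mulgV mul1g.
Qed.

Lemma greenJ_sym a b : greenJ a b -> greenJ b a.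
Proof. by move=> ab c; apply: iff_sym. Qed.

Lemma greenJ_trans a b c : greenJ a b -> greenJ b c -> greenJ a c.
Proof. by move=> ab bc d; apply: iff_trans (ab d) (bc d). Qed.

Section Green.
Hypothesis n_gt1 : 1 < n.

Lemma IN_compR a b : IN a -> IN b -> IN (compR a b).
Proof.
move=> Ia Ib; have [qa Sa] := IN_sub_permute n_gt1 Ia.
have [qb Sb] := IN_sub_permute n_gt1 Ib.
case: Ia => [_ [iso_a [[sa dom_a] [sa' ran_a]]]].
case: Ib => [_ [iso_b [[sb dom_b] [sb' ran_b]]]].
split; [|split; [|split]].
- have Sab := sub_permute_compR Sa Sb.
  by move=> x y z /Sab -> /Sab /permute_inj.
- move=> x y x' y'; rewrite /compR.
  case ax: (a x) => [x1|] //=; case ay: (a y) => [y1|] //= bx1 by1.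
  by rewrite (iso_b _ _ _ _ bx1 by1) (iso_a _ _ _ _ ax ay).
- exists (sa ++ map (permute qa^-1%g) sb) => x ndx; rewrite mem_cat.
  case ax: (a x) => [y|]; last by rewrite dom_a // => [[y]]; rewrite ax.
  rewrite -(permuteK qa x) -(Sa _ _ ax) map_f ?orbT // dom_b // => -[z bz].
  by apply: ndx; exists z; rewrite /compR ax.
- exists (sb' ++ map (permute qb) sa') => z nrz; rewrite mem_cat.
  case: (classic (ran b z)) => [[y by_]|]; last by move/ran_b => ->.
  rewrite (Sb _ _ by_) map_f ?orbT // ran_a // => -[x ax].
  by apply: nrz; exists x; rewrite /compR ax.
Qed.

Lemma IN1_compR u v : IN1 u -> IN1 v -> IN1 (compR u v).
Proof. by move=> /IN1_IN Iu /IN1_IN Iv; left; apply: IN_compR. Qed.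

Lemma greenLP a b : greenL a b <->
  (exists u, IN1 u /\ a = compR u b) /\ (exists v, IN1 v /\ b = compR v a).
Proof.
split=> [eqL | [[u [Iu ab]] [v [Iv ba]]] c].
  by split; [apply: (eqL a).1 | apply: (eqL b).2]; exists (@idI n); split=> //; right.
split=> -[w [Iw ->]].
  by exists (compR w u); rewrite ab compR_assoc; split => //; apply: IN1_compR.
by exists (compR w v); rewrite ba compR_assoc; split => //; apply: IN1_compR.
Qed.

Lemma greenRP a b : greenR a b <->
  (exists u, IN1 u /\ a = compR b u) /\ (exists v, IN1 v /\ b = compR a v).
Proof.
split=> [eqR | [[u [Iu ab]] [v [Iv ba]]] c].
  by split; [apply: (eqR a).1 | apply: (eqR b).2]; exists (@idI n);
    rewrite compR_idr; split=> //; right.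
split=> -[w [Iw ->]].
  by exists (compR u w); rewrite ab compR_assoc; split => //; apply: IN1_compR.
by exists (compR v w); rewrite ba compR_assoc; split => //; apply: IN1_compR.
Qed.

Lemma greenJP a b : greenJ a b <->
  (exists u v, IN1 u /\ IN1 v /\ a = compR (compR u b) v) /\
  (exists u v, IN1 u /\ IN1 v /\ b = compR (compR u a) v).
Proof.
split=> [eqJ | [[u [v [Iu [Iv ab]]]] [u' [v' [Iu' [Iv' ba]]]]] c].
  by split; [apply: (eqJ a).1 | apply: (eqJ b).2]; exists (@idI n), (@idI n);
    rewrite compR_idr; do !split=> //; right.
split=> -[w [w' [Iw [Iw' ->]]]].
  exists (compR w u), (compR v w'); rewrite ab !compR_assoc.
  by split; [|split]; try apply: IN1_compR.
exists (compR w u'), (compR v' w'); rewrite ba !compR_assoc.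
by split; [|split]; try apply: IN1_compR.
Qed.

Lemma greenL_J a b : greenL a b -> greenJ a b.
Proof.
move=> /greenLP[[u [Iu ab]] [v [Iv ba]]]; apply/greenJP.
by split; [exists u, (@idI n) | exists v, (@idI n)]; rewrite compR_idr; do !split=> //; right.
Qed.

Lemma greenR_J a b : greenR a b -> greenJ a b.
Proof.
move=> /greenRP[[u [Iu ab]] [v [Iv ba]]]; apply/greenJP.
by split; [exists (@idI n), u | exists (@idI n), v]; do !split=> //; right.
Qed.

Lemma HI_pperm q : HI (pperm q).
Proof.
have I1 r : IN1 (pperm r) by left; apply: IN_pperm.
split; first exact: IN_pperm.
split; [apply/greenLP | apply/greenRP]; split.
- by exists (pperm q); rewrite compR_idr.
- by exists (pperm q^-1%g); rewrite pperm_mul mulgV pperm1.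
- by exists (pperm q).
- by exists (pperm q^-1%g); rewrite pperm_mul mulVg pperm1.
Qed.

Lemma HI_pperm_inv s : HI s -> exists q, s = pperm q.
Proof.
move=> [Is [_ /greenRP[_ [u [_ id_su]]]]].
have [q Sq] := IN_sub_permute n_gt1 Is.
exists q; apply: functional_extensionality => x.
move: (f_equal (fun f => f x) id_su); rewrite /compR /idI.
by case sx: (s x) => [y|] //= _; rewrite (Sq _ _ sx).
Qed.

Lemma greenL_units a b : IN a -> IN b -> greenL a b -> exists q, a = compR (pperm q) b.
Proof.
move=> Ia Ib /greenLP[[u [_ ab]] [v [_ ba]]].
have [qa Sa] := IN_sub_permute n_gt1 Ia; have [qb Sb] := IN_sub_permute n_gt1 Ib.
exists (qb^-1 * qa)%g; apply: sub_permute_ran_eq => // y.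
by split; [rewrite {1}ab | rewrite {1}ba]; apply: ran_compR.
Qed.

Lemma greenR_units a b : IN a -> IN b -> greenR a b -> exists q, a = compR b (pperm q).
Proof.
move=> Ia Ib /greenRP[[u [_ ab]] [v [_ ba]]].
have [qa Sa] := IN_sub_permute n_gt1 Ia; have [qb Sb] := IN_sub_permute n_gt1 Ib.
exists (qa * qb^-1)%g; apply: sub_permute_dom_eq => // x.
by split; [rewrite {1}ab | rewrite {1}ba]; apply: dom_compR.
Qed.

Lemma greenJ_units a b : IN a -> IN b -> greenJ a b ->
  exists q1 q2, a = compR (compR (pperm q1) b) (pperm q2).
Proof.
move=> Ia Ib /greenJP[[u [v [Iu [_ ab]]]] [u' [v' [Iu' [_ ba]]]]].
have [qa Sa] := IN_sub_permute n_gt1 Ia; have [qb Sb] := IN_sub_permute n_gt1 Ib.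
have [qu Su] := IN_sub_permute n_gt1 (IN1_IN Iu).
have [qu' Su'] := IN_sub_permute n_gt1 (IN1_IN Iu').
have dom_ab x : dom a x -> dom b (permute qu x).
  by rewrite {1}ab; apply: dom_compR_sub_permute.
have dom_ba x : dom b x -> dom a (permute qu' x).
  by rewrite {1}ba; apply: dom_compR_sub_permute.
have Sub := sub_permute_compR (@sub_permute_pperm qu) Sb.
exists qu, (qa * (qb * qu)^-1)%g; apply: (sub_permute_dom_eq Sa Sub).
by move=> x; split; [apply: dom_ab | apply: (permute_incl_eq dom_ab dom_ba)].
Qed.

Lemma greenL_iff a b : IN a -> IN b -> (greenL a b <-> exists s, HI s /\ a = compR s b).
Proof.
move=> Ia Ib; split=> [/(greenL_units Ia Ib)[q ab] | [s [/HI_pperm_inv[q ->] ab]]].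
  by exists (pperm q); split; first exact: HI_pperm.
apply/greenLP; split; [exists (pperm q) | exists (pperm q^-1%g)]; rewrite ?ab ?ppermVK.
all: by split=> //; left; apply: IN_pperm.
Qed.

Lemma greenR_iff a b : IN a -> IN b -> (greenR a b <-> exists s, HI s /\ a = compR b s).
Proof.
move=> Ia Ib; split=> [/(greenR_units Ia Ib)[q ab] | [s [/HI_pperm_inv[q ->] ab]]].
  by exists (pperm q); split; first exact: HI_pperm.
apply/greenRP; split; [exists (pperm q) | exists (pperm q^-1%g)].
  by split=> //; left; apply: IN_pperm.
rewrite ab compR_assoc pperm_mul mulVg pperm1 compR_idr.
by split=> //; left; apply: IN_pperm.
Qed.

Lemma greenH_iff a b : IN a -> IN b -> (greenH a b <->
  exists s1 s2, HI s1 /\ HI s2 /\ a = compR s1 b /\ a = compR b s2).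
Proof.
move=> Ia Ib; rewrite /greenH (greenL_iff Ia Ib) (greenR_iff Ia Ib).
split=> [[[s1 [H1 E1]] [s2 [H2 E2]]] | [s1 [s2 [H1 [H2 [E1 E2]]]]]].
  by exists s1, s2.
by split; [exists s1 | exists s2].
Qed.

Lemma greenD_iff a b : IN a -> IN b ->
  (greenD a b <-> exists s1 s2, HI s1 /\ HI s2 /\ a = compR (compR s1 b) s2).
Proof.
move=> Ia Ib; split=> [[c [Ic [acL cbR]]] | [s1 [s2 [H1 [H2 ab]]]]].
  have [s1 [H1 ac]] := (greenL_iff Ia Ic).1 acL.
  have [s2 [H2 cb]] := (greenR_iff Ic Ib).1 cbR.
  by exists s1, s2; rewrite ac cb compR_assoc.
have Ic : IN (compR b s2) by apply: IN_compR; case: H2.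
exists (compR b s2); split=> //; split.
  by apply/(greenL_iff Ia Ic); exists s1; rewrite ab compR_assoc.
by apply/(greenR_iff Ic Ib); exists s2.
Qed.

Lemma greenDJ_iff a b : IN a -> IN b -> (greenD a b <-> greenJ a b).
Proof.
move=> Ia Ib; split=> [[c [_ [/greenL_J ac /greenR_J cb]]] | ].
  exact: greenJ_trans ac cb.
move=> /(greenJ_units Ia Ib)[q1 [q2 ab]]; apply/(greenD_iff Ia Ib).
by exists (pperm q1), (pperm q2); split; [|split]; rewrite ?ab //; apply: HI_pperm.
Qed.

Lemma greenJ_class_finite a : IN a ->
  exists l : list (ppmap n), forall b, IN b -> greenJ a b -> List.In b l.
Proof.
move=> Ia; exists (List.flat_map (fun q1 => List.map (fun q2 =>
  compR (compR (pperm q1) a) (pperm q2)) (enum {perm 'I_n})) (enum {perm 'I_n})).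
move=> b Ib /greenJ_sym/(greenJ_units Ib Ia)[q1 [q2 ->]].
apply/List.in_flat_map; exists q1; split; first exact: In_enum.
by apply/List.in_map_iff; exists q2; split; last exact: In_enum.
Qed.

Lemma idempotent_sub_id e y z : IN e -> compR e e = e -> e y = Some z -> z = y.
Proof.
move=> Ie ee ey; have [q Sq] := IN_sub_permute n_gt1 Ie.
have ez : e z = Some z by move: (f_equal (fun f => f y) ee); rewrite /compR ey.
by apply: (@permute_inj q); rewrite -(Sq _ _ ey) -(Sq _ _ ez).
Qed.

Lemma greenJ_npo_eq b g : IN b -> IN g -> greenJ b g -> npo b g -> b = g.
Proof.
move=> Ib Ig /(greenJ_units Ib Ig)[q1 [q2 bE]] [e [Ie [ee bge]]].
have dom_bg x : dom b x -> dom g x by rewrite {1}bge; apply: dom_compR.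
have dom_gb y : dom g y -> dom b (permute q1^-1%g y).
  by move=> [z gz]; exists (permute q2 z); rewrite bE /compR /pperm /= permuteKV gz.
have dom_gb' x : dom g x -> dom b x.
  rewrite -{1}(permute1 x); apply: (permute_incl_eq _ dom_gb) => y /dom_bg.
  by rewrite permute1.
apply: functional_extensionality => x; rewrite bge /compR.
case gx: (g x) => [y|] //=.
have [z bz] := dom_gb' x (ex_intro _ y gx).
by move: bz; rewrite bge /compR gx /= => ey; rewrite ey (idempotent_sub_id Ie ee ey).
Qed.

End Green.
End Points.

Unset Implicit Arguments.

Theorem theorem3p8 (n : nat) (hn : 2 <= n) :
  (forall alpha beta : ppmap n, IN alpha -> IN beta ->
     (greenL alpha beta <-> exists sigma, HI sigma /\ alpha = compR sigma beta) /\
     (greenR alpha beta <-> exists sigma, HI sigma /\ alpha = compR beta sigma) /\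
     (greenH alpha beta <-> exists sigma1 sigma2, HI sigma1 /\ HI sigma2 /\
                              alpha = compR sigma1 beta /\ alpha = compR beta sigma2) /\
     (greenD alpha beta <-> exists sigma1 sigma2, HI sigma1 /\ HI sigma2 /\
                              alpha = compR (compR sigma1 beta) sigma2)) /\
  (forall alpha beta : ppmap n, IN alpha -> IN beta ->
     (greenD alpha beta <-> greenJ alpha beta)) /\
  (forall alpha : ppmap n, IN alpha ->
     (exists l : list (ppmap n), forall beta, IN beta -> greenJ alpha beta -> List.In beta l) /\
     (forall beta gamma, IN beta -> IN gamma -> greenJ alpha beta -> greenJ alpha gamma ->
        npo beta gamma -> beta = gamma)).
Proof.
split; [|split].
- move=> a b Ia Ib.
  by split; [|split; [|split]]; [apply: greenL_iff | apply: greenR_iff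
                                 | apply: greenH_iff | apply: greenD_iff].
- by move=> a b; apply: greenDJ_iff.
move=> a Ia; split; first exact: greenJ_class_finite.
move=> b g Ib Ig ab ag; apply: greenJ_npo_eq => //.
exact: greenJ_trans (greenJ_sym ab) ag.
Qed.
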